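(* For every $n\ge1$, the sum of the coefficients of the degree-one monomials $X_0,X_1,\dots,X_{n-1}$ in the polynomial $\widehat C_n$ equals $(-1)^{n-1}$.
   Context: Polynomials $S_i(n)$: let $a_0,a_1,\dots$ be indeterminates, $a(x)=\sum_{i\ge0}a_ix^i$; for a positive integer $j$ set $G(x)=\prod_{i=0}^{j-1}\frac{1+a(x)x^2}{1+ix}$, $H(x)=\prod_{i=1-j}^{-1}\frac{1+ix}{1+a(x)x^2}$, $u=2j-1$, $v=j(j-1)$. For each $n\ge1$ there are unique $S_0(n),\dots,S_n(n)\in\mathbb{Q}[a_0,\dots,a_{n-2}]$, independent of $j$, with: for every positive integer $j$ the coefficient of $x^{n-1}$ in $\frac{G(x)-H(x)}{x^2}(1+a(x)x^2)$ equals $u(a_{n-1}+S_0(n)+\sum_{i=1}^nS_i(n)v^i)$. Write $S_i(n)(c_1,\dots,c_{n-1})$ for the substitution $a_k=c_{k+1}$. Recursion: $X_0,X_1,\dots$ are indeterminates, $D$ is the $\mathbb{Q}$-linear derivation of $\mathbb{Q}[X_0,X_1,\dots]$ with $D(X_k)=X_{k+1}$, $P_1=X_0$, $P_{m+1}=D(P_m)-3X_0P_m$, and for $m\ge1$ \[\widehat C_m=-S_0(m)(\widehat C_1,\dots,\widehat C_{m-1})+\sum_{i=1}^m3\cdot2^iS_i(m)(\widehat C_1,\dots,\widehat C_{m-1})P_i.\] *)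

From mathcomp Require Import all_boot all_order all_algebra.
From mathcomp Require Import mpoly.
Set Implicit Arguments. Unset Strict Implicit. Unset Printing Implicit Defensive.
Import GRing.Theory.
Local Open Scope ring_scope.

Section Series.
Variable R : comRingType.
Definition series := nat -> R.
Definition sone : series := fun m => (m == 0%N)%:R.
Definition sX : series := fun m => (m == 1%N)%:R.
Definition sC (c : R) : series := fun m => if m == 0%N then c else 0.
Definition sadd (f g : series) : series := fun m => f m + g m.
Definition sopp (f : series) : series := fun m => - f m.
Definition smul (f g : series) : series :=
  fun m => \sum_(k < m.+1) f k * g (m - k)%N.
Definition spow (f : series) (k : nat) : series := iter k (smul f) sone.
Definition sprod (fs : seq series) : series := foldr smul sone fs.
(* multiplicative inverse of a series f with constant term 1:
   1/f = 1/(1-g) = sum_k g^k with g = 1 - f (g has no constant term,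
   so only k <= m contributes to the coefficient of x^m) *)
Definition sinv (f : series) : series :=
  fun m => \sum_(k < m.+1) spow (sadd sone (sopp f)) k m.
(* (f / x^2), for f whose coefficients of x^0, x^1 vanish *)
Definition sdivX2 (f : series) : series := fun m => f m.+2.
End Series.

(* var N k = Y_k if k < N, and 0 otherwise *)
Definition var (N k : nat) : {mpoly rat[N]} := \sum_(i < N | val i == k) 'X_i.

(* S n i : Q[a_0,...,a_{n-2}] = {mpoly rat[n.-1]} ; embedded into
   Q[a_0,...,a_{n-1}] = {mpoly rat[n]} by a_k |-> a_k. *)
Definition Sfam := forall n : nat, nat -> {mpoly rat[n.-1]}.

Definition embS (n : nat) (p : {mpoly rat[n.-1]}) : {mpoly rat[n]} :=
  p \mPo [tuple var n i | i < n.-1].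

Section GH.
Variables (n j : nat).
Local Notation R := {mpoly rat[n]}.
(* a(x) = sum_i a_i x^i  (only a_0..a_{n-1} can influence the coefficient
   of x^(n-1) considered below) *)
Definition aser : series R := fun i => var n i.
Definition one_ax2 : series R := sadd (sone R) (smul aser (smul (sX R) (sX R))).
Definition lin (c : int) : series R := sadd (sone R) (smul (sC (c%:~R)) (sX R)).
Definition Gser : series R :=
  sprod [seq smul one_ax2 (sinv (lin (Posz i))) | i <- iota 0 j].
Definition Hser : series R :=
  sprod [seq smul (lin (Posz i - Posz j)) (sinv one_ax2) | i <- iota 1 j.-1].
Definition GHcoef : R := smul (sdivX2 (sadd Gser (sopp Hser))) one_ax2 n.-1.
End GH.

Definition S_spec (S : Sfam) : Prop :=
  forall n : nat, (1 <= n)%N -> forall j : nat, (1 <= j)%N ->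
    GHcoef n j =
    ((2 * j - 1)%N%:R : {mpoly rat[n]}) *
      (var n n.-1 + embS (S n 0%N)
       + \sum_(1 <= i < n.+1) embS (S n i) * ((j * (j - 1))%N%:R) ^+ i).

Section Recursion.
Variable N : nat.
Local Notation R := {mpoly rat[N]}.
(* the derivation D(X_k) = X_{k+1}, restricted to N variables
   (X_N is replaced by 0; this is exact for all uses below) *)
Definition Dder (p : R) : R := \sum_(i < N) p^`M(i) * var N i.+1.
(* Pk k = P_{k+1} *)
Fixpoint Pk (k : nat) : R :=
  if k is k'.+1 then Dder (Pk k') - 3%:R * var N 0 * Pk k' else var N 0.
Definition P (m : nat) : R := Pk m.-1.

Variable S : Sfam.
(* given cs = [:: C_1; ...; C_(m-1)], compute C_m *)
Definition Cnext (m : nat) (cs : seq R) : R :=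
  let ev (p : {mpoly rat[m.-1]}) : R := p \mPo [tuple nth 0 cs i | i < m.-1] in
  - ev (S m 0%N) + \sum_(1 <= i < m.+1) (3 * 2 ^ i)%N%:R * ev (S m i) * P i.
Fixpoint Cseq (m : nat) : seq R :=
  if m is m'.+1 then rcons (Cseq m') (Cnext m'.+1 (Cseq m')) else [::].
Definition Chat (m : nat) : R := nth 0 (Cseq m) m.-1.
End Recursion.

From mathcomp Require Import all_boot all_order all_algebra.
From mathcomp Require Import mpoly.
From Stdlib Require Import FunctionalExtensionality.
Set Implicit Arguments. Unset Strict Implicit. Unset Printing Implicit Defensive.
Import GRing.Theory.
Local Open Scope ring_scope.

(* Send every variable X_k to a single variable t: the sum of the coefficients of the
   degree-one monomials of C_n becomes the coefficient of t in the image.  By induction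
   every C_m has zero constant term.  At j = 1 the defining identity gives
   S_0(m) = [x^(m-1)] a(x)^2 x^2, quadratic in the a_k, so S_0(C_1, ..., C_(m-1)) has no
   term of degree < 2; since P_i has zero constant term and linear part X_(i-1), the
   coefficient of t in C_m is sum_i 3 2^i S_i(m)(0, ..., 0).  At a = 0 and j = 2
   (u = 3, v = 2) the defining identity evaluates this sum to (-1)^(m-1). *)

Section SeriesAlgebra.
Variable R : comNzRingType.
Implicit Types (f g h : series R) (c : R).

Definition sshift f : series R := fun m => if m is m'.+1 then f m' else 0.

Lemma sX_shift : sX R = sshift (sone R).
Proof. by apply: functional_extensionality => -[|[|m]]. Qed.

Lemma smul_shiftr f g : smul f (sshift g) = sshift (smul f g).
Proof.
apply: functional_extensionality => -[|m]; rewrite /smul.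
  by rewrite big_ord1 /= mulr0.
rewrite big_ord_recr /= subnn mulr0 addr0; apply: eq_bigr => k _.
by rewrite subSn // -ltnS.
Qed.

Lemma smulC f g : smul f g = smul g f.
Proof.
apply: functional_extensionality => m; rewrite /smul.
rewrite (reindex_inj rev_ord_inj) /=; apply: eq_bigr => k _.
rewrite subSS subKn; first exact: mulrC.
by rewrite -ltnS.
Qed.

Lemma smul1l f : smul (sone R) f = f.
Proof.
apply: functional_extensionality => m; rewrite /smul big_ord_recl big1 /=.
  by rewrite mul1r subn0 addr0.
by move=> k _; rewrite mul0r.
Qed.

Lemma smul1r f : smul f (sone R) = f.
Proof. by rewrite smulC smul1l. Qed.

Lemma smulDr f g h : smul f (sadd g h) = sadd (smul f g) (smul f h).
Proof.
apply: functional_extensionality => m; rewrite /smul /sadd -big_split.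
by apply: eq_bigr => k _; rewrite mulrDr.
Qed.

Lemma smulNr f g : smul f (sopp g) = sopp (smul f g).
Proof.
apply: functional_extensionality => m; rewrite /smul /sopp -sumrN.
by apply: eq_bigr => k _; rewrite mulrN.
Qed.

Lemma smul0l g : smul (fun _ => 0) g = (fun _ => 0).
Proof.
apply: functional_extensionality => m.
by rewrite /smul big1 // => k _; rewrite mul0r.
Qed.

Lemma smul_sC c f : smul (sC c) f = (fun m => c * f m).
Proof.
apply: functional_extensionality => m; rewrite /smul big_ord_recl big1 /=.
  by rewrite subn0 addr0.
by move=> k _; rewrite mul0r.
Qed.

Lemma sinv1 : sinv (sone R) = sone R.
Proof.
have one_sub_one : sadd (sone R) (sopp (sone R)) = (fun _ => 0).
  by apply: functional_extensionality => m; rewrite /sadd /sopp subrr.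
apply: functional_extensionality => m.
rewrite /sinv one_sub_one big_ord_recl big1 ?addr0 //.
by move=> k _; rewrite /spow /= smul0l.
Qed.

Lemma sX2_shift : smul (sX R) (sX R) = sshift (sshift (sone R)).
Proof. by rewrite {2}sX_shift smul_shiftr smul1r sX_shift. Qed.

Lemma smul_oppX f : smul (sopp (sX R)) f = sopp (sshift f).
Proof. by rewrite smulC smulNr sX_shift smul_shiftr smul1r. Qed.

Lemma spow_oppX k : spow (sopp (sX R)) k = fun m => (-1) ^+ k * (m == k)%:R.
Proof.
elim: k => [|k IHk].
  by apply: functional_extensionality => m; rewrite mul1r.
rewrite /= -/(spow _ k) smul_oppX IHk.
apply: functional_extensionality => -[|m]; rewrite /sopp /=.
  by rewrite mulr0 oppr0.
by rewrite eqSS exprS mulN1r mulNr.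
Qed.

End SeriesAlgebra.

Section SeriesMorphism.
Variables (R R' : comNzRingType) (g : {rmorphism R -> R'}).
Implicit Types f h : series R.

Definition smap f : series R' := fun m => g (f m).

Lemma smap1 : smap (sone R) = sone R'.
Proof. by apply: functional_extensionality => m; rewrite /smap rmorph_nat. Qed.

Lemma smapX : smap (sX R) = sX R'.
Proof. by apply: functional_extensionality => m; rewrite /smap rmorph_nat. Qed.

Lemma smapC c : smap (sC c) = sC (g c).
Proof.
by apply: functional_extensionality => m; rewrite /smap /sC; case: eqP; rewrite ?rmorph0.
Qed.

Lemma smapD f h : smap (sadd f h) = sadd (smap f) (smap h).
Proof. by apply: functional_extensionality => m; rewrite /smap rmorphD. Qed.

Lemma smapN f : smap (sopp f) = sopp (smap f).
Proof. by apply: functional_extensionality => m; rewrite /smap rmorphN. Qed.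

Lemma smapM f h : smap (smul f h) = smul (smap f) (smap h).
Proof.
apply: functional_extensionality => m; rewrite /smap /smul rmorph_sum.
by apply: eq_bigr => k _; rewrite rmorphM.
Qed.

Lemma smap_pow f k : smap (spow f k) = spow (smap f) k.
Proof. by elim: k => [|k IHk]; rewrite ?smap1 //= smapM IHk. Qed.

Lemma smap_prod fs : smap (sprod fs) = sprod (map smap fs).
Proof. by elim: fs => [|f fs IHfs]; rewrite ?smap1 //= smapM IHfs. Qed.

Lemma smap_inv f : smap (sinv f) = sinv (smap f).
Proof.
apply: functional_extensionality => m; rewrite /smap /sinv rmorph_sum.
by apply: eq_bigr => k _; rewrite -smap1 -smapN -smapD -smap_pow.
Qed.

End SeriesMorphism.

Section GHGeneric.
Variables (R : comNzRingType) (a : series R).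

Definition one_ax2_of : series R := sadd (sone R) (smul a (smul (sX R) (sX R))).
Definition lin_of (c : int) : series R := sadd (sone R) (smul (sC c%:~R) (sX R)).
Definition G_of j : series R :=
  sprod [seq smul one_ax2_of (sinv (lin_of (Posz i))) | i <- iota 0 j].
Definition H_of j : series R :=
  sprod [seq smul (lin_of (Posz i - Posz j)) (sinv one_ax2_of) | i <- iota 1 j.-1].
Definition GH_of n j : R := smul (sdivX2 (sadd (G_of j) (sopp (H_of j)))) one_ax2_of n.-1.

Lemma lin_of0 : lin_of 0 = sone R.
Proof.
rewrite /lin_of mulr0z smul_sC.
by apply: functional_extensionality => m; rewrite /sadd mul0r addr0.
Qed.

Lemma GH_of_j1 n : GH_of n 1 = smul a one_ax2_of n.-1.
Proof.
rewrite /GH_of /G_of /H_of /= lin_of0 sinv1 !smul1r.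
congr (smul _ _ _); apply: functional_extensionality => m.
rewrite /sdivX2 /sadd /sopp /one_ax2_of sX2_shift !smul_shiftr smul1r.
by rewrite /sadd /sone /= subr0 add0r.
Qed.

End GHGeneric.

Lemma GHcoefE n j : GHcoef n j = GH_of (aser n) n j.
Proof. by []. Qed.

Lemma rmorph_GH_of (R R' : comNzRingType) (g : {rmorphism R -> R'}) a n j :
  g (GH_of a n j) = GH_of (smap g a) n j.
Proof.
have map_one_ax2 : smap g (one_ax2_of a) = one_ax2_of (smap g a).
  by rewrite /one_ax2_of smapD !smapM smap1 smapX.
have map_lin c : smap g (lin_of R c) = lin_of R' c.
  by rewrite /lin_of smapD smapM smap1 smapX smapC rmorph_int.
rewrite /GH_of -[g _]/(smap g _ n.-1) smapM map_one_ax2.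
rewrite -[smap g (sdivX2 _)]/(sdivX2 (smap g _)) smapD smapN /G_of /H_of.
rewrite !smap_prod -!map_comp; congr (smul (sdivX2 (sadd (sprod _) (sopp (sprod _)))) _ _).
  by apply: eq_map => i /=; rewrite smapM map_one_ax2 smap_inv map_lin.
by apply: eq_map => i /=; rewrite smapM map_lin smap_inv map_one_ax2.
Qed.

Lemma sinv_lin_of1 (R : comNzRingType) : sinv (lin_of R 1) = fun m => (-1) ^+ m.
Proof.
have one_sub_lin : sadd (sone R) (sopp (lin_of R 1)) = sopp (sX R).
  apply: functional_extensionality => m; rewrite /lin_of mulr1z smul_sC /sadd /sopp.
  by rewrite mul1r opprD addrA subrr add0r.
apply: functional_extensionality => m; rewrite /sinv one_sub_lin.
under eq_bigr => k _ do rewrite spow_oppX.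
rewrite big_ord_recr /= eqxx mulr1 big1 ?add0r // => k _.
by rewrite (gtn_eqF (ltn_ord k)) mulr0.
Qed.

(* At a = 0 and j = 2, (G - H)/x^2 = (1/(1+x) - (1-x))/x^2 = sum_m (-1)^m x^m. *)
Lemma GH_of0_j2 (R : comNzRingType) n : (1 <= n)%N ->
  GH_of (fun _ => 0 : R) n 2 = (-1) ^+ n.-1.
Proof.
case: n => // n _.
have one_ax2_0 : one_ax2_of (fun _ => 0 : R) = sone R.
  by rewrite /one_ax2_of smul0l; apply: functional_extensionality => m; rewrite /sadd addr0.
rewrite /GH_of /G_of /H_of /= one_ax2_0 sinv1 lin_of0 sinv1 !smul1l !smul1r sinv_lin_of1.
have -> : Posz 1 - Posz 2 = -1 by [].
rewrite /sdivX2 /sadd /sopp /lin_of mulrN1z smul_sC /=.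
by rewrite /sadd /= mulr0 addr0 subr0 !exprS !mulN1r opprK.
Qed.

Section MmapFacts.
Variables (n : nat) (R : comNzRingType).
Implicit Types p : {mpoly R[n]}.

Lemma eq_mmap (S : comNzRingType) (f1 f2 : R -> S) (h1 h2 : 'I_n -> S) p :
  f1 =1 f2 -> h1 =1 h2 -> mmap f1 h1 p = mmap f2 h2 p.
Proof.
move=> ef eh; rewrite /mmap; apply: eq_bigr => m _.
by rewrite ef (mmap1_eq _ eh).
Qed.

Lemma rmorph_mmap (S S' : comNzRingType) (f : R -> S) (h : 'I_n -> S)
    (g : {rmorphism S -> S'}) p :
  g (mmap f h p) = mmap (g \o f) (g \o h) p.
Proof.
rewrite /mmap rmorph_sum; apply: eq_bigr => m _.
rewrite rmorphM /mmap1 rmorph_prod; congr (_ * _).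
by apply: eq_bigr => i _; rewrite rmorphXn.
Qed.

(* The morphism laws restated with [mmap] as head symbol: the generic [raddf_sum] and
   [rmorphM] leave a structure projection that later rewrites cannot match. *)
Lemma mmap_sum (S : comNzRingType) (f : {additive R -> S}) (h : 'I_n -> S)
    I (r : seq I) (P : pred I) (F : I -> {mpoly R[n]}) :
  mmap f h (\sum_(i <- r | P i) F i) = \sum_(i <- r | P i) mmap f h (F i).
Proof. exact: raddf_sum. Qed.

Lemma mmapM (S : comNzRingType) (f : {rmorphism R -> S}) (h : 'I_n -> S) p q :
  mmap f h (p * q) = mmap f h p * mmap f h q.
Proof. exact: rmorphM. Qed.

Lemma mmap_nat (S : comNzRingType) (f : {rmorphism R -> S}) (h : 'I_n -> S) k :
  mmap f h k%:R = k%:R.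
Proof. exact: rmorph_nat. Qed.

Lemma mmap_comp (k : nat) (S : comNzRingType) (f : {rmorphism R -> S})
    (h : 'I_k -> S) (lq : n.-tuple {mpoly R[k]}) p :
  mmap f h (p \mPo lq) = mmap f (fun i => mmap f h (tnth lq i)) p.
Proof.
rewrite comp_mpolyEX raddf_sum [RHS]/mmap; apply: eq_bigr => m _.
rewrite /= mmapZ comp_mpolyX rmorph_prod /mmap1; congr (_ * _).
by apply: eq_bigr => i _; rewrite rmorphXn.
Qed.

Lemma coef0_mmap (h : 'I_n -> {poly R}) p :
  (mmap polyC h p)`_0 = p.@[fun i => (h i)`_0].
Proof.
rewrite -[_`_0]/(coefp 0 _) rmorph_mmap /meval.
by apply: eq_mmap => [c|i] //=; exact: polyCK.
Qed.

Lemma mcoeff_sum_msupp p m0 : p@_m0 = \sum_(m <- msupp p) p@_m * (m == m0)%:R.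
Proof.
rewrite {1}(mpolyE p) raddf_sum; apply: eq_bigr => m _.
by rewrite /= mcoeffZ mcoeffX.
Qed.

Lemma mcoeffU_mderiv p i : p@_U_(i) = (p^`M(i))@_0.
Proof. by rewrite mcoeff_mderiv add0m mnm0E mulr1n. Qed.

Lemma mcoeff0M p q : (p * q)@_0 = p@_0 * q@_0.
Proof. exact: (rmorphM (mcoeff 0%MM)). Qed.

Lemma mcoeffMU p q i : (p * q)@_U_(i) = p@_U_(i) * q@_0 + p@_0 * q@_U_(i).
Proof. by rewrite !mcoeffU_mderiv mderivM mcoeffD !mcoeff0M. Qed.

End MmapFacts.

Notation evalX := (mmap polyC (fun _ => 'X)).

Section EvalX.
Variables (n : nat) (R : comNzRingType).
Implicit Types p : {mpoly R[n]}.

Lemma coef_evalX p j : (evalX p)`_j = \sum_(m <- msupp p) p@_m * (mdeg m == j)%:R.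
Proof.
rewrite /mmap coef_sum; apply: eq_bigr => m _.
by rewrite coefCM /mmap1 prodrXr -mdegE coefXn eq_sym.
Qed.

Lemma coef0_evalX p : (evalX p)`_0 = p@_0.
Proof.
rewrite coef_evalX (mcoeff_sum_msupp p 0%MM); apply: eq_bigr => m _.
by rewrite mdeg_eq0.
Qed.

Lemma coef1_evalX p : (evalX p)`_1 = \sum_(i < n) p@_U_(i).
Proof.
under [RHS]eq_bigr => i _ do rewrite (mcoeff_sum_msupp p).
rewrite exchange_big coef_evalX; apply: eq_bigr => m _; rewrite -mulr_sumr.
congr (_ * _); have [[i /eqP ->]|not_deg1] := mdeg1P m.
  rewrite (bigD1 i) //= eqxx big1 ?addr0 // => j ne_ji.
  by rewrite eq_mnm1 eq_sym (negbTE ne_ji).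
rewrite big1 // => i _.
by case: eqP => // m_eq; case: not_deg1; exists i; apply/eqP.
Qed.

End EvalX.

Lemma sum_ord_indicator (V : nzRingType) (N k : nat) (F : nat -> V) :
  \sum_(i < N) (val i == k)%:R * F (val i) = if (k < N)%N then F k else 0.
Proof.
rewrite (eq_bigr (fun i : 'I_N => if val i == k then F k else 0)); last first.
  by move=> i _; case: eqP => [->|_]; rewrite ?mul1r ?mul0r.
rewrite -big_mkcond /=; case: ltnP => hk.
  by rewrite (big_pred1 (Ordinal hk)) // => i /=; rewrite -val_eqE.
by rewrite big_pred0 // => i; rewrite ltn_eqF // (leq_trans (ltn_ord i) hk).
Qed.

Section LinearParts.
Variable N : nat.
Implicit Types p : {mpoly rat[N]}.

Lemma var_lt k (hk : (k < N)%N) : var N k = 'X_(Ordinal hk).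
Proof. by rewrite /var (big_pred1 (Ordinal hk)) // => i /=; rewrite -val_eqE. Qed.

Lemma var_ge k : (N <= k)%N -> var N k = 0.
Proof.
move=> hk; rewrite /var big_pred0 // => i.
by rewrite ltn_eqF // (leq_trans (ltn_ord i) hk).
Qed.

Lemma mcoeff0_var k : (var N k)@_0 = 0.
Proof.
case: (ltnP k N) => hk; last by rewrite var_ge ?mcoeff0.
by rewrite var_lt mcoeffX mnm1_eq0.
Qed.

Lemma mcoeffU_var k (l : 'I_N) : (var N k)@_U_(l) = (val l == k)%:R.
Proof.
case: (ltnP k N) => hk; last first.
  by rewrite var_ge ?mcoeff0 // ltn_eqF // (leq_trans (ltn_ord l) hk).
by rewrite var_lt mcoeffXU -val_eqE eq_sym.
Qed.

Lemma mmap_var (S : comNzRingType) (f : {rmorphism rat -> S}) (h : nat -> S) k :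
  mmap f (fun l : 'I_N => h l) (var N k) = if (k < N)%N then h k else 0.
Proof.
case: (ltnP k N) => hk; last by rewrite var_ge ?raddf0.
by rewrite var_lt mmapX mmap1U.
Qed.

Lemma mcoeff0_Dder p : (Dder p)@_0 = 0.
Proof.
by rewrite /Dder raddf_sum big1 // => i _; rewrite /= mcoeff0M mcoeff0_var mulr0.
Qed.

Lemma mcoeffU_Dder p (l : 'I_N) :
  (Dder p)@_U_(l) = \sum_(i < N) (val l == (val i).+1)%:R * p@_U_(i).
Proof.
rewrite /Dder raddf_sum; apply: eq_bigr => i _.
by rewrite /= mcoeffMU mcoeff0_var mulr0 add0r mcoeffU_var -mcoeffU_mderiv mulrC.
Qed.

Lemma mcoeff0_Pk k : (Pk N k)@_0 = 0.
Proof.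
elim: k => [|k IHk] /=; first exact: mcoeff0_var.
by rewrite mcoeffB mcoeff0_Dder !mcoeff0M IHk !mulr0 subrr.
Qed.

Lemma mcoeffU_Pk k (l : 'I_N) : (Pk N k)@_U_(l) = (val l == k)%:R.
Proof.
elim: k l => [|k IHk] l /=; first exact: mcoeffU_var.
rewrite mcoeffB mcoeffU_Dder mcoeffMU mcoeff0_Pk !mcoeff0M mcoeff0_var.
rewrite !mulr0 mul0r addr0.
under eq_bigr => i _ do rewrite IHk mulrC.
rewrite (sum_ord_indicator N k (fun j => (val l == j.+1)%:R)).
case: ltnP => // hk.
by rewrite ltn_eqF // (leq_trans (ltn_ord l) (leqW hk)).
Qed.

Lemma coef0_evalX_P i : (evalX (P N i))`_0 = 0.
Proof. by rewrite coef0_evalX mcoeff0_Pk. Qed.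

Lemma coef1_evalX_P i : (1 <= i <= N)%N -> (evalX (P N i))`_1 = 1.
Proof.
case/andP=> i_gt0 i_le; rewrite coef1_evalX.
under eq_bigr => l _ do rewrite mcoeffU_Pk -[_%:R]mulr1.
by rewrite (sum_ord_indicator N i.-1 (fun=> 1)) prednK ?i_le.
Qed.

End LinearParts.

Section SeriesOverPoly.
Variable R : comNzRingType.
Implicit Types a b : series {poly R}.

Lemma coef1M (p q : {poly R}) : (p * q)`_1 = p`_0 * q`_1 + p`_1 * q`_0.
Proof. by rewrite coefM big_ord_recr big_ord1. Qed.

Lemma coef0_smul a b : (forall k, (a k)`_0 = 0) -> forall k, (smul a b k)`_0 = 0.
Proof.
move=> a0 k; rewrite /smul coef_sum big1 // => i _.
by rewrite coef0M a0 mul0r.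
Qed.

Lemma coef1_smul a b : (forall k, (a k)`_0 = 0) -> (forall k, (b k)`_0 = 0) ->
  forall k, (smul a b k)`_1 = 0.
Proof.
move=> a0 b0 k; rewrite /smul coef_sum big1 // => i _.
by rewrite coef1M a0 b0 mul0r mulr0 addr0.
Qed.

End SeriesOverPoly.

Section DefiningIdentity.
Variables (S : Sfam) (HS : S_spec S) (n : nat) (n_gt0 : (0 < n)%N).
Local Notation zero := (fun _ : 'I_n => 0 : rat).

Lemma S_spec_j1 : GHcoef n 1 = var n n.-1 + embS (S n 0).
Proof.
rewrite (HS n_gt0 (isT : (0 < 1)%N)) /= mul1n subnn mulr0n mul1r.
rewrite big_nat big1 ?addr0 // => i /andP [i_gt0 _].
by rewrite expr0n gtn_eqF // mulr0.
Qed.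

Lemma meval0_var k : (var n k).@[zero] = 0.
Proof.
case: (ltnP k n) => hk; last by rewrite var_ge ?meval0.
by rewrite var_lt mevalXU.
Qed.

Lemma smap_meval0_aser : smap (meval zero) (aser n) = fun _ => 0.
Proof. by apply: functional_extensionality => k; exact: meval0_var. Qed.

Lemma embS_S0_at0 : (embS (S n 0)).@[zero] = 0.
Proof.
have := congr1 (meval zero) S_spec_j1.
rewrite GHcoefE rmorph_GH_of smap_meval0_aser GH_of_j1 smul0l mevalD meval0_var add0r.
by move/esym.
Qed.

Lemma S_weighted_sum_at0 :
  \sum_(1 <= i < n.+1) (embS (S n i)).@[zero] *+ (3 * 2 ^ i) = (-1) ^+ n.-1.
Proof.
have := congr1 (meval zero) (HS n_gt0 (isT : (0 < 2)%N)).
rewrite GHcoefE rmorph_GH_of smap_meval0_aser GH_of0_j2 // => ->.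
rewrite mevalM rmorph_nat !mevalD meval0_var embS_S0_at0 !add0r raddf_sum /=.
under [in RHS]eq_bigr => i _ do rewrite mevalM rmorphXn rmorph_nat.
rewrite mulr_sumr; apply: eq_bigr => i _.
by rewrite -mulr_natr natrM natrX mulrCA mulrA.
Qed.

Lemma coef1_S0 (R : comNzRingType) (g : {rmorphism {mpoly rat[n]} -> {poly R}}) :
  (forall k, (g (var n k))`_0 = 0) -> (g (embS (S n 0)))`_1 = 0.
Proof.
move=> g_var0; have := congr1 g S_spec_j1.
rewrite GHcoefE rmorph_GH_of GH_of_j1 rmorphD /one_ax2_of smulDr smul1r /sadd.
move=> /addrI <-; apply: coef1_smul => // k; exact: coef0_smul.
Qed.

End DefiningIdentity.

Section Cnext.
Variables (N : nat) (S : Sfam) (HS : S_spec S) (m : nat) (m_gt0 : (0 < m)%N).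
Variable cs : seq {mpoly rat[N]}.
Hypothesis cs_coef0 : forall i, (evalX (nth 0 cs i))`_0 = 0.

Local Notation psi := (mmap (@polyC rat) (fun i : 'I_m => evalX (nth 0 cs i))).

Lemma coef0_psi p : (psi p)`_0 = p.@[fun _ => 0].
Proof. by rewrite coef0_mmap; apply: meval_eq => i. Qed.

Lemma evalX_comp_cs p :
  evalX (p \mPo [tuple nth 0 cs i | i < m.-1]) = psi (embS p).
Proof.
rewrite /embS !mmap_comp; apply: eq_mmap => // i.
rewrite !tnth_mktuple (mmap_var _ _ (fun k => evalX (nth 0 cs k))) ifT //.
exact: leq_trans (ltn_ord i) (leq_pred m).
Qed.

Lemma evalX_Cnext : evalX (Cnext S m cs) = - psi (embS (S m 0)) +
  \sum_(1 <= i < m.+1) (psi (embS (S m i)) * evalX (P N i)) *+ (3 * 2 ^ i).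
Proof.
rewrite /Cnext mmapD mmapN evalX_comp_cs [X in _ + X = _]mmap_sum; congr (_ + _).
apply: eq_bigr => i _.
by rewrite !mmapM mmap_nat evalX_comp_cs -mulrA mulr_natl.
Qed.

Lemma coef0_evalX_Cnext : (evalX (Cnext S m cs))`_0 = 0.
Proof.
rewrite evalX_Cnext coefD coefN coef0_psi embS_S0_at0 // oppr0 add0r coef_sum.
by rewrite big1 // => i _; rewrite coefMn coef0M coef0_evalX_P mulr0 mul0rn.
Qed.

Lemma coef1_evalX_Cnext : (m <= N)%N -> (evalX (Cnext S m cs))`_1 = (-1) ^+ m.-1.
Proof.
move=> m_le; rewrite evalX_Cnext coefD coefN coef1_S0 //; last first.
  move=> k /=; rewrite (mmap_var _ _ (fun k => evalX (nth 0 cs k))).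
  by case: ifP; rewrite ?coef0.
rewrite oppr0 add0r coef_sum -(S_weighted_sum_at0 HS m_gt0) !big_nat.
apply: eq_bigr => i /andP [i_gt0 i_le].
have i_le_N : (i <= N)%N := leq_trans (i_le : (i <= m)%N) m_le.
rewrite coefMn coef1M coef0_evalX_P coef1_evalX_P ?i_gt0 ?i_le_N //.
by rewrite mulr0 addr0 mulr1 coef0_psi.
Qed.

End Cnext.

Lemma size_Cseq N S m : size (Cseq N S m) = m.
Proof. by elim: m => //= m IHm; rewrite size_rcons IHm. Qed.

Lemma coef0_evalX_Cseq N S (HS : S_spec S) m i :
  (evalX (nth 0 (Cseq N S m) i))`_0 = 0.
Proof.
elim: m i => [|m IHm] i /=; first by rewrite nth_nil coef0_evalX mcoeff0.
rewrite nth_rcons; case: ifP => _; first exact: IHm.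
case: ifP => _; last by rewrite coef0_evalX mcoeff0.
exact: coef0_evalX_Cnext.
Qed.

Theorem proposition4p5 (S : Sfam) (HS : S_spec S) (n : nat) (hn : (1 <= n)%N) :
  \sum_(i < n) (Chat n S n)@_(U_(i))%MM = (-1) ^+ n.-1.
Proof.
case: n hn => // n _.
rewrite -coef1_evalX /Chat /= nth_rcons size_Cseq ltnn eqxx.
by apply: coef1_evalX_Cnext => //; exact: coef0_evalX_Cseq.
Qed.
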